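(* Let $G$ be a nontrivial finite cyclic group. Then the order-sum graph $\Gamma_{OS}(G)$ is minimally edge connected if and only if $|G|$ is a prime.
   Context: The order-sum graph $\Gamma_{OS}(G)$ of a finite group $G$ is the simple undirected graph with vertex set $G$ in which two distinct elements $x,y$ are adjacent if and only if $o(x)+o(y)>|G|$, where $o(x)$ is the order of $x$. For a connected graph $\Gamma$, an edge cut-set is a set $S$ of edges such that $\Gamma-S$ is disconnected or has just one vertex, and the edge connectivity $\kappa'(\Gamma)$ is the smallest size of an edge cut-set. $\Gamma$ is minimally edge connected if $\kappa'(\Gamma-\epsilon)=\kappa'(\Gamma)-1$ for every edge $\epsilon$ of $\Gamma$. *)

From mathcomp Require Import all_boot fingroup cyclic.
Set Implicit Arguments. Unset Strict Implicit. Unset Printing Implicit Defensive.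

(* Simple graphs with vertex set V : {set T} and edge set E : {set {set T}},
   each edge being a 2-element set [set x; y]. *)
Section Graphs.
Variable T : finType.

Definition adj (E : {set {set T}}) : rel T :=
  fun x y => (x != y) && ([set x; y] \in E).

Definition disc_or_triv (V : {set T}) (E : {set {set T}}) : bool :=
  (#|V| <= 1) || ~~ [forall x in V, forall y in V, connect (adj E) x y].

(* edge connectivity: smallest size of an edge cut-set (S = E is always a
   cut-set, so #|E| is a harmless neutral element) *)
Definition edge_conn (V : {set T}) (E : {set {set T}}) : nat :=
  \big[minn/#|E|]_(S in powerset E | disc_or_triv V (E :\: S)) #|S|.

Definition min_edge_connected (V : {set T}) (E : {set {set T}}) : Prop :=
  forall e, e \in E -> edge_conn V E = (edge_conn V (E :\ e)).+1.
End Graphs.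

Definition os_edges (gT : finGroupType) (G : {set gT}) : {set {set gT}} :=
  [set e : {set gT} | [exists x in G, exists y in G,
      [&& x != y, e == [set x; y] & #|G| < #[x]%g + #[y]%g]]].

From mathcomp Require Import all_boot fingroup cyclic pgroup.
From mathcomp Require Import zify.
Set Implicit Arguments. Unset Strict Implicit. Unset Printing Implicit Defensive.

(* The identity is adjacent exactly to the elements of order |G|, so the edge
   connectivity is at most their number k.  If |G| is prime, every non-identity
   element has order |G|: the graph is complete and deleting an edge lowers the
   edge connectivity from |G|-1 to |G|-2.  If |G| is composite, the identity and
   an element of prime order have smaller order, so k <= |G|-2; a vertex of order
   |G| is adjacent to every other vertex, so every cut still has at least k edges
   after deleting the edge {x, x^-1} for a generator x, and the edge connectivity
   does not drop. *)

Section EdgeConnectivity.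
Variable T : finType.
Implicit Types (V K : {set T}) (F S : {set {set T}}).

Lemma adj_sym F : symmetric (adj F).
Proof. by move=> x y; rewrite /adj eq_sym setUC. Qed.

Lemma disc_or_triv_isolated V F v w : v \in V -> w \in V -> w != v ->
  (forall z, ~~ adj F v z) -> disc_or_triv V F.
Proof.
move=> vV wV wv noadj; apply/orP; right.
apply/forallPn; exists v; rewrite vV /=; apply/forallPn; exists w; rewrite wV /=.
apply/negP => /connectP[[|z p] /=]; last by rewrite (negbTE (noadj z)).
by move=> _ wE; rewrite wE eqxx in wv.
Qed.

Lemma disc_or_triv_disconnected V F : 1 < #|V| -> disc_or_triv V F ->
  exists x y, [/\ x \in V, y \in V & ~~ connect (adj F) x y].
Proof.
rewrite /disc_or_triv => V2; rewrite leqNgt V2 /= => /forallPn[x].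
rewrite negb_imply => /andP[xV /forallPn[y]]; rewrite negb_imply => /andP[yV nc].
by exists x, y.
Qed.

Lemma bigmin_leq_cond (I : finType) (P : pred I) (f : I -> nat) x0 j :
  P j -> \big[minn/x0]_(i | P i) f i <= f j.
Proof.
move=> Pj; have : j \in index_enum I by rewrite mem_index_enum.
elim: (index_enum I) => // i r IHr; rewrite big_cons inE => /orP[/eqP <-|jr].
  by rewrite Pj geq_minl.
by case: ifP => _; [rewrite geq_min IHr ?orbT | apply: IHr].
Qed.

Lemma edge_conn_le_cut V F S : S \subset F -> disc_or_triv V (F :\: S) ->
  edge_conn V F <= #|S|.
Proof.
move=> sSF cutS; apply: (bigmin_leq_cond
  (P := fun S => (S \in powerset F) && disc_or_triv V (F :\: S))).
by rewrite powersetE sSF cutS.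
Qed.

Lemma edge_conn_ge V F m : 1 < #|V| ->
  (forall S, S \subset F -> disc_or_triv V (F :\: S) -> m <= #|S|) ->
  m <= edge_conn V F.
Proof.
move=> V2 cut_ge; apply: (big_ind (fun k => m <= k)).
- apply: cut_ge => //; rewrite setDv.
  case/card_gt1P: V2 => x [y [xV yV xy]].
  by apply: (disc_or_triv_isolated xV yV); rewrite 1?eq_sym // => z; rewrite /adj inE andbF.
- by move=> k l; rewrite leq_min => -> ->.
- by move=> S /andP[]; rewrite powersetE; exact: cut_ge.
Qed.

Lemma edge_conn_le_card V F : edge_conn V F <= #|F|.
Proof.
apply: (big_ind (fun k => k <= #|F|)) => // [k l kF _|S].
  by rewrite geq_min kF.
by rewrite powersetE => /andP[/subset_leq_card].
Qed.

(* A cut S of F - e yields the cut e |: S of F. *)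
Lemma edge_conn_le_del V F e : e \in F ->
  edge_conn V F <= (edge_conn V (F :\ e)).+1.
Proof.
move=> eF; apply: (big_ind (fun k => edge_conn V F <= k.+1)).
- apply: leq_trans (edge_conn_le_card V F) _.
  by rewrite [in X in X <= _](cardsD1 e) eF.
- by move=> k l; rewrite -minnSS leq_min => -> ->.
- move=> S /andP[]; rewrite powersetE => sSFe cutS.
  have sSF : S \subset F by apply: subset_trans sSFe (subsetDl _ _).
  apply: leq_trans (edge_conn_le_cut (S := e |: S) _ _) _.
  + by rewrite subUset sub1set eF sSF.
  + by rewrite -setDDl.
  + by rewrite cardsU1; case: (e \in S).
Qed.

Lemma edge_conn_le_deg V F v w : {in F, forall e : {set T}, #|e| = 2} ->
  v \in V -> w \in V -> w != v -> edge_conn V F <= #|[set z | adj F v z]|.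
Proof.
move=> F2 vV wV wv; set star := F :&: [set e : {set T} | v \in e].
apply: leq_trans (edge_conn_le_cut (S := star) (subsetIl _ _) _) _.
  apply: (disc_or_triv_isolated vV wV wv) => z.
  by rewrite /adj !inE eqxx; case: ([set v; z] \in F); rewrite ?andbF.
apply: leq_trans (leq_imset_card (fun z => [set v; z]) _).
apply: subset_leq_card; apply/subsetP => e; rewrite !inE => /andP[eF ve].
have /cards2P[x [y [xy exy]]] : #|e| == 2 by rewrite F2.
apply/imsetP; move: ve; rewrite exy => /set2P[] ->.
  by exists y; rewrite // inE /adj xy -exy.
by exists x; rewrite 1?setUC // inE /adj eq_sym xy setUC -exy.
Qed.

Definition out_edges_in F S (C : pred T) :=
  forall p q, C p -> ~~ C q -> [set p; q] \in F -> [set p; q] \in S.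

Lemma component_out_edges_in F S x :
  out_edges_in F S (connect (adj (F :\: S)) x).
Proof.
move=> p q xp xq pqF; have pq : p != q by apply: contraNneq xq => <-.
apply/negPn/negP => pqS; case/negP: xq; apply: connect_trans xp (connect1 _).
by rewrite /adj pq inE pqS pqF.
Qed.

(* Each g in K contributes the edge {g, y} or {x, g} leaving C, injectively. *)
Lemma card_le_cut F S (C : pred T) x y K : out_edges_in F S C ->
  C x -> ~~ C y -> x \notin K ->
  {in K, forall g, if C g then [set g; y] \in F else [set x; g] \in F} ->
  #|K| <= #|S|.
Proof.
move=> outC Cx Cy xK edgeK.
pose cross g := if C g then [set g; y] else [set x; g].
have cross_inj : {in K &, injective cross}.
  have neq_y g : C g -> g != y by move=> Cg; apply: contraNneq Cy => <-.
  have neq_x g : g \in K -> g != x by move=> gK; apply: contraNneq xK => <-.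
  move=> g h gK hK; rewrite /cross.
  case: (boolP (C g)) => Cg; case: (boolP (C h)) => Ch /setP eq_gh.
  - by move: (eq_gh g); rewrite !inE eqxx (negbTE (neq_y _ Cg)) !orbF => /esym/eqP.
  - by move: (eq_gh g); rewrite !inE eqxx (negbTE (neq_x _ gK)) /= => /esym/eqP.
  - by move: (eq_gh h); rewrite !inE eqxx (negbTE (neq_x _ hK)) /= => /eqP ->.
  - by move: (eq_gh g); rewrite !inE eqxx (negbTE (neq_x _ gK)) /= => /esym/eqP.
rewrite -(card_in_imset cross_inj); apply: subset_leq_card.
apply/subsetP => _ /imsetP[g gK ->]; move: (edgeK g gK); rewrite /cross.
case: ifP => Cg gF; first exact: outC.
by apply: outC gF => //; rewrite Cg.
Qed.

Lemma edge_conn_complete V F :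
  (forall x y, x \in V -> y \in V -> x != y -> [set x; y] \in F) ->
  #|V|.-1 <= edge_conn V F.
Proof.
move=> complete; have [V1|V2] := leqP #|V| 1; first by case: #|V| V1 => [|[]].
apply: edge_conn_ge => // S _ /(disc_or_triv_disconnected V2)[x [y [xV yV nxy]]].
rewrite (cardsD1 x) xV add1n /=.
apply: (card_le_cut (@component_out_edges_in F S x) (connect0 _ x) nxy).
  by rewrite !inE eqxx.
move=> g; rewrite !inE => /andP[gx gV]; case: ifP => xg.
  by apply: complete => //; apply: contraNneq nxy => <-.
by apply: complete; rewrite // eq_sym.
Qed.

Lemma cardsD2 V a b : a \in V -> b \in V -> a != b -> #|V :\ a :\ b|.+2 = #|V|.
Proof.
move=> aV bV ab; rewrite [#|V|](cardsD1 a) [#|V :\ a|](cardsD1 b).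
by rewrite !inE eq_sym ab aV bV.
Qed.

Section DeleteUniversalEdge.
Variables (V K : {set T}) (F : {set {set T}}) (a b : T).
Hypotheses (sKV : K \subset V) (aK : a \in K) (bK : b \in K) (ab : a != b).
Hypothesis universal :
  {in K, forall g z, z \in V -> z != g -> [set g; z] \in F}.
Let e := [set a; b].

Let eV z : z \in e -> z \in V.
Proof. by case/set2P=> ->; apply: (subsetP sKV). Qed.

Lemma cut_ge_universal_root S r z : r \in V -> r \notin K -> z \in V ->
  let C := connect (adj (F :\ e :\: S)) r in
  ~~ C z -> (forall g, C g -> [set g; z] != e) -> #|K| <= #|S|.
Proof.
move=> rV rK zV C Cz zE.
apply: (card_le_cut (@component_out_edges_in (F :\ e) S r) (connect0 _ r) Cz rK).
move=> g gK; case: ifP => Cg; rewrite in_setD1.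
  rewrite zE //=; apply: universal => //.
  by apply: contraNneq Cz => ->.
apply/andP; split.
  by apply: contraNneq rK => /setP/(_ r); rewrite set21 => /esym/set2P[]->.
by rewrite setUC; apply: universal => //; apply: contraNneq rK => ->.
Qed.

Lemma cut_ge_universal_lone S r d : #|K|.+2 <= #|V| -> d \in e ->
  let C := connect (adj (F :\ e :\: S)) r in
  ~~ C d -> (forall z, z \in V -> ~~ C z -> z = d) -> #|K| <= #|S|.
Proof.
move=> cardK de C Cd lone; apply: (@leq_trans #|V :\ a :\ b|).
  by rewrite -2!ltnS (cardsD2 (eV (set21 a b)) (eV (set22 a b)) ab).
have sym := sym_connect_sym (adj_sym (F :\ e :\: S)).
apply: (card_le_cut (@component_out_edges_in (F :\ e) S d) (connect0 _ d) (y := r)).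
- by rewrite sym.
- by case/set2P: de => ->; rewrite !inE eqxx ?andbF.
move=> g; rewrite !inE => /and3P[gb ga gV].
have ge : g \notin e by rewrite !inE negb_or ga gb.
have Cg : C g by apply/negPn/negP => /(lone g gV) gd; rewrite gd de in ge.
have -> : connect (adj (F :\ e :\: S)) d g = false.
  by apply/negP => dg; case/negP: Cd; apply: connect_trans Cg _; rewrite sym.
apply/andP; split; first by apply: contraNneq ge => <-; rewrite set22.
apply: universal => //; first by case/set2P: de => ->.
by apply: contraNneq Cd => <-.
Qed.

Lemma edge_conn_del_universal : #|K|.+2 <= #|V| -> #|K| <= edge_conn V (F :\ e).
Proof.
move=> cardK; have V2 : 1 < #|V| by lia.
have [r rV rK] : exists2 r, r \in V & r \notin K.
  apply/exists_inP; rewrite -negb_forall_in; apply: contraTN cardK => /forall_inP sVK.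
  have : #|V| <= #|K| by apply/subset_leq_card/subsetP.
  lia.
apply: edge_conn_ge => // S _ /(disc_or_triv_disconnected V2)[x [y [xV yV nxy]]].
set C := connect (adj (F :\ e :\: S)) r.
have sym := sym_connect_sym (adj_sym (F :\ e :\: S)).
have [z zV Cz] : exists2 z, z \in V & ~~ C z.
  case: (boolP (C x)) => Cx; last by exists x.
  exists y => //; apply: contraNN nxy => Cy.
  by apply: connect_trans Cy; rewrite sym.
(* Deleting e only hurts the count from r when a vertex outside C has its
   e-partner inside C; that vertex is then the only one outside C. *)
case: (boolP [exists w in V, ~~ C w && (w \notin e)]).
  case/exists_inP=> w wV /andP[Cw we].
  apply: (cut_ge_universal_root rV rK wV Cw) => g _.
  by apply: contraNneq we => <-; rewrite set22.
move/exists_inPn=> outside.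
have inside_e w : w \in V -> ~~ C w -> w \in e.
  by move=> wV Cw; move: (outside w wV); rewrite Cw negbK.
case: (boolP (C a || C b)) => [Cab | ].
  apply: (cut_ge_universal_lone cardK (inside_e z zV Cz) Cz) => w wV Cw.
  have ze := inside_e z zV Cz; have we := inside_e w wV Cw.
  case/set2P: ze Cz => -> Cz; case/set2P: we Cw => -> Cw //;
    by exfalso; move: Cab; apply/negP; rewrite negb_or; apply/andP.
rewrite negb_or => /andP[Ca Cb].
apply: (cut_ge_universal_root rV rK (eV (set21 a b)) Ca) => g Cg.
by apply: contraTneq Cg => /setP/(_ g); rewrite set21 => /esym/set2P[]->.
Qed.

End DeleteUniversalEdge.

End EdgeConnectivity.

Section OrderSumGraph.
Variables (gT : finGroupType) (G : {group gT}).
Local Notation E := (os_edges G).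
Local Notation n := #|G|.

Definition full_order := [set g in G | #[g]%g == n].

Lemma os_edgeP e : reflect (exists x y,
    [/\ x \in G, y \in G, x != y, e = [set x; y] & n < #[x]%g + #[y]%g])
  (e \in E).
Proof.
rewrite inE; apply: (iffP existsP) => [[x /andP[xG /existsP[y]]]|[x [y [xG yG xy -> lt]]]].
  by case/andP=> yG /and3P[xy /eqP-> lt]; exists x, y.
by exists x; rewrite xG; apply/existsP; exists y; rewrite yG xy eqxx lt.
Qed.

Lemma os_edge_card e : e \in E -> #|e| = 2.
Proof. by case/os_edgeP=> x [y [_ _ xy -> _]]; rewrite cards2 xy. Qed.

Lemma order_le_card g : g \in G -> #[g]%g <= n.
Proof. by move=> gG; apply: dvdn_leq (cardG_gt0 G) (order_dvdG gG). Qed.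

Lemma os_adj1_full_order z : adj E 1%g z -> z \in full_order.
Proof.
case/andP=> z1 /os_edgeP[x [y [xG yG _ /setP exy lt]]].
have x1 : 1%g \in [set x; y] by rewrite -exy set21.
have xz : z \in [set x; y] by rewrite -exy set22.
have [zG zn] : z \in G /\ n < #[z]%g.+1.
  case/set2P: x1 => ?; case/set2P: xz => ?; subst; rewrite ?eqxx // in z1;
    rewrite order1 in lt; split=> //; lia.
by rewrite inE zG eqn_leq order_le_card.
Qed.

Lemma os_edge_sub e : e \in E -> e \subset G.
Proof. by case/os_edgeP=> x [y [xG yG _ -> _]]; rewrite subUset !sub1set xG yG. Qed.

Lemma full_order_sub : full_order \subset G.
Proof. by apply/subsetP => g; rewrite inE => /andP[]. Qed.

Lemma full_order_universal :
  {in full_order, forall g z, z \in G -> z != g -> [set g; z] \in E}.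
Proof.
move=> g; rewrite inE => /andP[gG /eqP og] z zG zg; apply/os_edgeP; exists g, z.
by rewrite og eq_sym zg; split=> //; rewrite -addn1 leq_add2l order_gt0.
Qed.

Lemma prime_full_order g : prime n -> g \in G -> g != 1%g -> g \in full_order.
Proof.
move=> pr gG g1; rewrite inE gG /=.
case/primeP: pr => _ /(_ _ (order_dvdG gG)) /orP[|//].
by rewrite order_eq1 (negbTE g1).
Qed.

Lemma os_edges_complete_prime x y : prime n -> x \in G -> y \in G -> x != y ->
  [set x; y] \in E.
Proof.
move=> pr xG yG xy; have [x1|x1] := eqVneq x 1%g.
  rewrite setUC; apply: full_order_universal => //.
  by apply: prime_full_order; rewrite // -x1 eq_sym.
by apply: full_order_universal; rewrite 1?eq_sym // prime_full_order.
Qed.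

(* The identity and an element of order [pdiv n] (by Cauchy) are not of full order. *)
Lemma card_full_order_composite : 1 < n -> ~~ prime n -> #|full_order|.+2 <= n.
Proof.
move=> n1 np; have pp := pdiv_prime n1.
have [u uG ou] := Cauchy pp (pdiv_dvd n).
have u1 : 1%g != u by rewrite eq_sym -order_eq1 ou; have := prime_gt1 pp; lia.
have {}ou : #[u]%g != n by rewrite ou; apply: contraNneq np => <-.
suff : #|full_order| <= #|G :\ 1%g :\ u| by rewrite -(cardsD2 (group1 G) uG u1) !ltnS.
apply/subset_leq_card/subsetP => g; rewrite !inE => /andP[gG /eqP og].
rewrite gG andbT; apply/andP; split; first by apply: contraNneq ou => <-; rewrite og.
by apply: contraTneq n1 => g1; rewrite -og g1 order1.
Qed.

Lemma cyclic_full_order_pair : cyclic G -> 2 < n ->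
  exists a b, [/\ a \in full_order, b \in full_order & a != b].
Proof.
case/cyclicP=> x defG n2; have ox : #[x]%g = n by rewrite defG.
have xG : x \in G by rewrite defG cycle_id.
exists x, x^-1%g; rewrite !inE groupV xG orderV ox eqxx; split=> //.
apply: contraTneq n2 => xV; rewrite -leqNgt -ox; apply: order_inf.
by rewrite expgS expg1 {1}xV mulVg.
Qed.

Lemma os_prime_min_edge_connected : prime n -> min_edge_connected G E.
Proof.
move=> pr e eE; have [a [b [aG bG ab defe _]]] := os_edgeP _ eE.
have lb : n.-1 <= edge_conn G E.
  by apply: edge_conn_complete => x y; exact: os_edges_complete_prime.
have del := edge_conn_le_del G eE.
suff : edge_conn G (E :\ e) <= #|G :\ a :\ b|.
  move=> le_del; apply/eqP; rewrite eqn_leq del /=; apply: leq_trans lb.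
  by rewrite -(cardsD2 aG bG ab) ltnS.
apply: leq_trans (edge_conn_le_deg _ aG bG _) _; rewrite 1?eq_sym //.
  by move=> f /setD1P[_ /os_edge_card].
apply/subset_leq_card/subsetP => z; rewrite !inE => /andP[za /setD1P[zE /os_edge_sub]].
rewrite subUset !sub1set => /andP[_ zG]; apply/and3P; split=> //.
  by apply: contraNneq zE => ->; rewrite defe.
by rewrite eq_sym.
Qed.

Lemma os_composite_not_min_edge_connected : cyclic G -> 1 < n -> ~~ prime n ->
  ~ min_edge_connected G E.
Proof.
move=> cG n1 np mec.
have cardK := card_full_order_composite n1 np.
have n2 : 2 < n by rewrite ltn_neqAle n1 andbT; apply: contraNneq np => <-.
have [a [b [aK bK ab]]] := cyclic_full_order_pair cG n2.
have aG : a \in G := subsetP full_order_sub a aK.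
have bG : b \in G := subsetP full_order_sub b bK.
have eE : [set a; b] \in E by apply: full_order_universal; rewrite 1?eq_sym.
have ub : edge_conn G E <= #|full_order|.
  apply: leq_trans (edge_conn_le_deg os_edge_card (group1 G) aG _) _.
    by apply: contraTneq aK => ->; rewrite inE order1; apply: contraTN n1 => /andP[_ /eqP <-].
  by apply/subset_leq_card/subsetP => z; rewrite inE; exact: os_adj1_full_order.
have lb := edge_conn_del_universal full_order_sub aK bK ab full_order_universal cardK.
by move: (leq_trans ub lb); rewrite (mec _ eE) ltnn.
Qed.

End OrderSumGraph.

Theorem mainTheorem5 (gT : finGroupType) (G : {group gT}) :
  cyclic G -> 1 < #|G| ->
  (min_edge_connected G (os_edges G) <-> prime #|G|).
Proof.
move=> cG n1; split; last exact: os_prime_min_edge_connected.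
move=> mec; apply/negPn/negP => np.
exact: os_composite_not_min_edge_connected cG n1 np mec.
Qed.
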